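(* Let $d\ge 2$ and $N\in\mathbb{N}$. Let $P:\mathbb{C}^d\to\mathbb{C}$ be an entire function that is $(N\mathbb{Z})^d$-periodic, with restriction to $\mathbb{R}^d$ given by the Fourier series $$P(\mathbf{x})=\sum_{\mathbf{k}\in\mathbb{Z}^d} c_{\mathbf{k}}\,e^{2\pi i\mathbf{k}\cdot\mathbf{x}/N},\quad \mathbf{x}\in\mathbb{R}^d.$$ Then $P$ satisfies $$\sum_{\mathbf{n}\in\mathbb{Z}^d} P(\mathbf{x}+\mathbf{n})\,\chi_{[0,N]^d}(\mathbf{x}+\mathbf{n}) = 1\quad\text{for all }\mathbf{x}\in\mathbb{R}^d$$ if and only if $c_{\mathbf{k}}=\frac{1}{N^d}\delta_{\mathbf{k},\mathbf{0}}$ for all $\mathbf{k}\in(N\mathbb{Z})^d$.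
   Context: $\chi_{[0,N]^d}$ is the indicator function of $[0,N]^d$; $\delta_{\mathbf{k},\mathbf{0}}$ is the Kronecker delta. *)

From HB Require Import structures.
From mathcomp Require Import all_boot all_order all_algebra.
From mathcomp Require Import all_classical all_reals all_analysis.
From mathcomp Require Import complex.
Set Implicit Arguments. Unset Strict Implicit. Unset Printing Implicit Defensive.
Import Order.TTheory GRing.Theory Num.Theory.
Import numFieldNormedType.Exports.
Local Open Scope ring_scope.
Local Open Scope complex_scope.
Local Open Scope classical_set_scope.

Definition expi (R : realType) (t : R) : R[i] := (cos t) +i* (sin t).

Definition realvec (R : realType) (d : nat) (x : 'I_d -> R) : 'I_d -> R[i] :=
  fun i => (x i)%:C.

Definition zdot (R : realType) (d : nat) (k : 'I_d -> int) (x : 'I_d -> R) : R :=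
  \sum_(i < d) (k i)%:~R * x i.

(* Partial sum over the box [-M, M]^d of the lattice Z^d. *)
Definition boxsum (V : nmodType) (d M : nat) (F : ('I_d -> int) -> V) : V :=
  \sum_(k : {ffun 'I_d -> 'I_(M + M).+1}) F (fun i => (k i)%:Z - M%:Z).
Arguments boxsum {V} d M F.

(* P : C^d -> C is entire: complex-differentiable in each variable separately
   at every point (equivalent to holomorphy on C^d by Hartogs' theorem). *)
Definition entire (R : realType) (d : nat) (P : ('I_d -> R[i]) -> R[i]) : Prop :=
  forall (z : 'I_d -> R[i]) (i : 'I_d),
    derivable (fun w : R[i]^o => (P (fun j => if j == i then w else z j) : R[i]^o)) (z i) 1.

Definition lattice_periodic (R : realType) (d N : nat) (P : ('I_d -> R[i]) -> R[i]) : Prop :=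
  forall (z : 'I_d -> R[i]) (m : 'I_d -> int),
    P (fun i => z i + ((N%:Z * m i)%:~R)) = P z.

Definition chi_cube (R : realType) (d N : nat) (y : 'I_d -> R) : R[i] :=
  if [forall i, (0 <= y i) && (y i < N%:R)] then 1 else 0.

(* restriction of P to R^d is given by the (absolutely convergent) Fourier series
   sum_k c_k e^{2 pi i k.x/N}, summed over Z^d *)
Definition fourier_series_of (R : realType) (d N : nat)
  (P : ('I_d -> R[i]) -> R[i]) (c : ('I_d -> int) -> R[i]) : Prop :=
  (exists B : R[i], forall M, boxsum d M (fun k => `|c k|) <= B) /\
  forall x : 'I_d -> R,
    ((fun M => boxsum d M (fun k => c k * expi (2 * pi * zdot k x / N%:R)))
       : nat -> R[i]^o) @ \oo --> (P (realvec x) : R[i]^o).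

(* the lattice sum  sum_{n in Z^d} P(x+n) chi_{[0,N)^d}(x+n) = 1, the sum
   being taken as the limit of box partial sums (it has finitely many nonzero
   terms, so the limit is eventually attained) *)
Definition partition_of_unity (R : realType) (d N : nat)
  (P : ('I_d -> R[i]) -> R[i]) : Prop :=
  forall x : 'I_d -> R,
    ((fun M => boxsum d M (fun n =>
        let y := fun i => x i + (n i)%:~R in P (realvec y) * chi_cube N y))
       : nat -> R[i]^o) @ \oo --> (1 : R[i]^o).

From HB Require Import structures.
From mathcomp Require Import all_boot all_order all_algebra.
From mathcomp Require Import all_classical all_reals all_analysis.
From mathcomp Require Import complex.
From mathcomp Require Import zify ring lra.
Import Order.TTheory GRing.Theory Num.Theory.
Import numFieldNormedType.Exports.
Set Implicit Arguments. Unset Strict Implicit. Unset Printing Implicit Defensive.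
Local Open Scope ring_scope.
Local Open Scope complex_scope.
Local Open Scope classical_set_scope.

(* For fixed x, the n in Z^d with x + n in
   the cube [0, N)^d range over N consecutive integers in each coordinate, so
   summing the Fourier mode e_k over these x + n gives e_k(x) D_k, where
   D_k = N^d if k is in (NZ)^d and D_k = 0 otherwise.  Exchanging this finite
   lattice sum with the Fourier series, the partition of unity says exactly that
   the absolutely summable series sum_k c_k D_k e_k(x) equals 1 for every x.
   Such coefficients are unique: averaging the series against e_{-j} over the grid
   (N/L){0, ..., L-1}^d leaves the coefficients with k = j mod L, and as L grows all
   of them but the one at j fall into the tail of the absolutely convergent sum.
   Hence c_k D_k is 1 at k = 0 and 0 elsewhere. *)

Section ComplexExponential.
Variable R : realType.

Lemma expi0 : expi (0 : R) = 1.
Proof. by rewrite /expi cos0 sin0. Qed.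

Lemma expiD (a b : R) : expi (a + b) = expi a * expi b.
Proof.
rewrite /expi cosD sinD; apply/eqP; rewrite eq_complex /=.
by apply/andP; split; apply/eqP; ring.
Qed.

Lemma expiMn (a : R) (n : nat) : expi (a *+ n) = expi a ^+ n.
Proof. by elim: n => [|n IH]; rewrite ?mulr0n ?expi0 // mulrS expiD IH exprS. Qed.

Lemma expi_sum (I : finType) (f : I -> R) : expi (\sum_i f i) = \prod_i expi (f i).
Proof. by elim/big_rec2: _ => [|i y1 y2 _ <-]; rewrite ?expi0 ?expiD. Qed.

Lemma expi_2pi_nat (n : nat) : expi (2 * pi * n%:R : R) = 1.
Proof.
by rewrite mulr_natr expiMn /expi mulrC mulr_natr cos2pi sin2pi expr1n.
Qed.

Lemma expi_2pi_int (n : int) : expi (2 * pi * n%:~R : R) = 1.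
Proof.
case: n => n; first exact: expi_2pi_nat.
apply: (@mulIf _ (expi (2 * pi * n.+1%:R))); first by rewrite expi_2pi_nat oner_neq0.
by rewrite -expiD expi_2pi_nat mul1r NegzE intrN mulrN pmulrn addNr expi0.
Qed.

Lemma expi_neq1 (t : R) : 0 < t < 2 * pi -> expi t != 1.
Proof.
move=> /andP[t_gt0 t_lt2pi]; apply/negP => /eqP [cos_t _].
have sin_gt0 : 0 < sin (t / 2) by apply: sin_gt0_pi; apply/andP; split; lra.
have pyth := cos2Dsin2 (t / 2).
have cos_half : cos (t / 2) ^+ 2 - sin (t / 2) ^+ 2 = 1.
  by rewrite !expr2 -cosD -splitr.
have /eqP : sin (t / 2) ^+ 2 = 0 by lra.
by rewrite expf_eq0 /= => /eqP sin0; lra.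
Qed.

Lemma expi_root_eq1 (L : nat) (k : int) : (0 < L)%N ->
  (expi (2 * pi * k%:~R / L%:R : R) == 1) = (L%:Z %| k)%Z.
Proof.
move=> L_gt0; have L_neq0 : (L%:R : R) != 0 by rewrite pnatr_eq0 -lt0n.
have -> : expi (2 * pi * k%:~R / L%:R : R) = expi (2 * pi * (k %% L)%Z%:~R / L%:R).
  rewrite {1}(divz_eq k L) intrD mulrDr mulrDl expiD intrM mulrA mulfK //.
  by rewrite expi_2pi_int mul1r.
apply/idP/idP; last by move/dvdz_mod0P => ->; rewrite mulr0 mul0r expi0.
apply: contraLR => k_ndvd; apply: expi_neq1.
have r_neq0 : (k %% L)%Z != 0 by apply: contra k_ndvd => /eqP /dvdz_mod0P.
have r_gt0 : (0 : R) < (k %% L)%Z%:~R.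
  by rewrite ltr0z lt_def r_neq0 modz_ge0 ?eqz_nat -?lt0n.
have r_ltL : ((k %% L)%Z%:~R : R) < L%:R.
  by rewrite -[L%:R]/((L%:Z)%:~R) ltr_int ltz_pmod.
have pi_gt0 := pi_gt0 R.
by rewrite ltr_pdivrMr ?ltr0n // ltr_pM2l ?mulr_gt0 ?andbT ?invr_gt0 ?ltr0n.
Qed.

Lemma sum_expi_root_pow (L : nat) (k : int) : (0 < L)%N ->
  \sum_(m < L) expi (2 * pi * k%:~R / L%:R : R) ^+ m =
  if (L%:Z %| k)%Z then L%:R else 0.
Proof.
move=> L_gt0; rewrite -(expi_root_eq1 k L_gt0); case: eqP => [->|/eqP w_neq1].
  by rewrite (eq_bigr (fun _ => 1)) ?sumr_const ?card_ord // => i _; rewrite expr1n.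
have wL : expi (2 * pi * k%:~R / L%:R : R) ^+ L = 1.
  rewrite -expiMn -[_ *+ L]mulr_natr mulfVK ?expi_2pi_int //.
  by rewrite pnatr_eq0 -lt0n.
move: (subrX1 (expi (2 * pi * k%:~R / L%:R : R)) L).
by rewrite wL subrr => /esym/eqP; rewrite mulf_eq0 subr_eq0 (negbTE w_neq1) => /eqP.
Qed.

End ComplexExponential.

Lemma prodr_if_forall (V : comNzRingType) (I : finType) (p : pred I) (v : V) :
  \prod_i (if p i then v else 0) = if [forall i, p i] then v ^+ #|I| else 0.
Proof.
case: forallP => [pT|/forallP].
  by rewrite -prodr_const; apply: eq_bigr => i _; rewrite pT.
rewrite negb_forall => /existsP [i /negbTE pi_false].
by rewrite (bigD1 i) //= pi_false mul0r.
Qed.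

Section BoxSums.
Variable d : nat.

Definition inbox (M : nat) (n : 'I_d -> int) :=
  [forall i, (- M%:Z <= n i) && (n i <= M%:Z)].

Lemma inbox_shift (M : nat) (k : {ffun 'I_d -> 'I_(M + M).+1}) :
  inbox M (fun i => (k i)%:Z - M%:Z).
Proof. by apply/forallP => i; case: (k i) => a /= a_lt; apply/andP; split; lia. Qed.

Lemma boxsum_inbox (V : nmodType) (M M' : nat) (F : ('I_d -> int) -> V) :
  (M <= M')%N ->
  \sum_(k : {ffun 'I_d -> 'I_(M' + M').+1} | inbox M (fun i => (k i)%:Z - M'%:Z))
     F (fun i => (k i)%:Z - M'%:Z) = boxsum d M F.
Proof.
move=> le_MM'.
pose widen (k : {ffun 'I_d -> 'I_(M + M).+1}) :=
  [ffun i => inord (k i + (M' - M)) : 'I_(M' + M').+1].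
pose narrow (k : {ffun 'I_d -> 'I_(M' + M').+1}) :=
  [ffun i => inord (k i - (M' - M)) : 'I_(M + M).+1].
have widenE k i : (widen k i : nat) = (k i + (M' - M))%N.
  by rewrite ffunE inordK //; case: (k i) => /= a; lia.
rewrite (reindex_onto widen narrow) /=; last first.
  move=> k /forallP k_in; apply/ffunP => i; apply: val_inj.
  rewrite /= widenE ffunE; move: (k_in i); case: (k i) => a /= a_lt a_in.
  by rewrite inordK; lia.
apply: eq_big => [k|k _]; last first.
  by congr F; apply: funext => i; rewrite widenE; case: (k i) => a /= a_lt; lia.
apply/andP; split.
  apply/forallP => i; rewrite widenE.
  by case: (k i) => a /= a_lt; apply/andP; split; lia.
apply/eqP/ffunP => i; apply: val_inj; rewrite /= ffunE widenE.
by case: (k i) => a /= a_lt; rewrite inordK; lia.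
Qed.

Lemma boxsum_delta (V : nmodType) (M : nat) (n0 : 'I_d -> int) (v : V) :
  inbox M n0 -> boxsum d M (fun n => if [forall i, n i == n0 i] then v else 0) = v.
Proof.
move=> /forallP n0_in.
pose k0 : {ffun 'I_d -> 'I_(M + M).+1} := [ffun i => inord (absz (n0 i + M%:Z))].
have k0E i : (k0 i)%:Z - M%:Z = n0 i.
  by rewrite ffunE; move: (n0_in i) => /andP [? ?]; rewrite inordK; lia.
rewrite /boxsum (bigD1 k0) //= big1 ?addr0 => [|k k_neq].
  by rewrite (_ : [forall i, _] = true) //; apply/forallP => i; rewrite k0E.
case: forallP => // k_eq; case/eqP: k_neq; apply/ffunP => i; apply: val_inj.
by move/eqP: (k_eq i); rewrite /= -k0E; lia.
Qed.

End BoxSums.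

Section LatticeSum.
Variables (R : realType) (d N : nat).
Hypothesis N_gt0 : (0 < N)%N.

Definition chi_interval (y : R) : R[i] := if (0 <= y) && (y < N%:R) then 1 else 0.

Definition echar (k : 'I_d -> int) (x : 'I_d -> R) : R[i] :=
  expi (2 * pi * zdot k x / N%:R).

Definition shiftz (x : 'I_d -> R) (n : 'I_d -> int) : 'I_d -> R :=
  fun i => x i + (n i)%:~R.

Lemma chi_interval_shift (x : R) (n : int) :
  chi_interval (x + n%:~R) =
  if (- n <= Num.floor x) && (Num.floor x < N%:Z - n) then 1 else 0.
Proof.
rewrite /chi_interval floor_ge_int floor_lt_int intrN intrB.
by congr (if _ then _ else _); congr andb; apply/idP/idP => ?; lra.
Qed.

Lemma sum_chi_interval_window (g : int -> R[i]) (x : R) (M : nat) :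
  (absz (Num.floor x) + N <= M)%N ->
  \sum_(j < (M + M).+1) chi_interval (x + (j%:Z - M%:Z)%:~R) * g (j%:Z - M%:Z) =
  \sum_(j < N) g (j%:Z - Num.floor x).
Proof.
set fl := Num.floor x => le_M.
(* x + (j - M) lies in [0, N) exactly when s <= j < s + N. *)
pose s := absz (M%:Z - fl).
have -> : \sum_(j < N) g (j%:Z - fl) = \sum_(s <= j < s + N) g (j%:Z - M%:Z).
  rewrite -{1}[s]add0n big_addn addKn big_mkord; apply: eq_bigr => j _.
  by congr g; rewrite /s; lia.
rewrite (big_nat_widen _ _ (M + M).+1) /=; last by rewrite /s; lia.
rewrite big_geq_mkord [RHS]big_mkcond /=; apply: eq_bigr => j _.
rewrite chi_interval_shift -/fl.
have -> : (- (j%:Z - M%:Z) <= fl) && (fl < N%:Z - (j%:Z - M%:Z)) =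
          (j < s + N)%N && (s <= j)%N.
  by rewrite /s; apply/idP/idP => /andP[? ?]; apply/andP; split; lia.
by case: ifP; rewrite ?mul1r ?mul0r.
Qed.

Definition interval_sum (M : nat) (k : int) (x : R) : R[i] :=
  \sum_(j < (M + M).+1) chi_interval (x + (j%:Z - M%:Z)%:~R) *
     expi (2 * pi * (k%:~R * (j%:Z - M%:Z)%:~R) / N%:R).

Lemma interval_sumE (M : nat) (k : int) (x : R) :
  (absz (Num.floor x) + N <= M)%N ->
  interval_sum M k x = if (N%:Z %| k)%Z then N%:R else 0.
Proof.
move=> le_M; have N_neq0 : (N%:R : R) != 0 by rewrite pnatr_eq0 -lt0n.
rewrite /interval_sum.
rewrite (sum_chi_interval_window (fun n => expi (2 * pi * (k%:~R * n%:~R) / N%:R))) //.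
set fl := Num.floor x; pose w := expi (2 * pi * k%:~R / N%:R : R).
have termE (j : 'I_N) : expi (2 * pi * (k%:~R * (j%:Z - fl)%:~R) / N%:R) =
    expi (2 * pi * (k * - fl)%:~R / N%:R) * w ^+ j.
  rewrite /w -expiMn -expiD; congr expi; rewrite intrB intrM intrN -mulr_natr.
  by field; rewrite N_neq0.
rewrite (eq_bigr _ (fun j _ => termE j)) -mulr_sumr sum_expi_root_pow //.
case: ifP => [/dvdzP [q ->]|_]; last by rewrite mulr0.
have -> : 2 * pi * (q * N%:Z * - fl)%:~R / N%:R = 2 * pi * (q * - fl)%:~R :> R.
  by rewrite !intrM; field; rewrite N_neq0.
by rewrite expi_2pi_int mul1r.
Qed.

Lemma chi_cube_prod (y : 'I_d -> R) : chi_cube N y = \prod_i chi_interval (y i).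
Proof. by rewrite /chi_cube /chi_interval prodr_if_forall expr1n. Qed.

Lemma echar_shift (k n : 'I_d -> int) (x : 'I_d -> R) :
  echar k (shiftz x n) =
  echar k x * \prod_i expi (2 * pi * ((k i)%:~R * (n i)%:~R) / N%:R).
Proof.
rewrite /echar /zdot /shiftz -expi_sum -expiD; congr expi.
rewrite -mulr_suml -mulr_sumr -mulrDl -mulrDr -big_split /=.
by congr (_ * _ / _); apply: eq_bigr => i _; rewrite mulrDr.
Qed.

Lemma echarD (k j : 'I_d -> int) (x : 'I_d -> R) :
  echar (fun i => k i + j i) x = echar k x * echar j x.
Proof.
rewrite /echar -expiD /zdot -mulrDl -mulrDr -big_split /=.
by congr (expi (_ * _ / _)); apply: eq_bigr => i _; rewrite intrD mulrDl.
Qed.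

Lemma echar0 (x : 'I_d -> R) : echar (fun _ => 0) x = 1.
Proof. by rewrite /echar /zdot big1 ?mulr0 ?mul0r ?expi0 // => i _; rewrite mul0r. Qed.

Definition cube_weight (k : 'I_d -> int) : R[i] :=
  if [forall i, (N%:Z %| k i)%Z] then N%:R ^+ d else 0.

Definition cube_radius (x : 'I_d -> R) : nat :=
  (\max_i (absz (Num.floor (x i)) + N))%N.

Lemma boxsum_chi_cube_echar (M : nat) (k : 'I_d -> int) (x : 'I_d -> R) :
  (cube_radius x <= M)%N ->
  boxsum d M (fun n => chi_cube N (shiftz x n) * echar k (shiftz x n)) =
  echar k x * cube_weight k.
Proof.
move=> le_M.
have -> : cube_weight k = \prod_i interval_sum M (k i) (x i).
  rewrite (eq_bigr (fun i => if (N%:Z %| k i)%Z then N%:R else 0)); last first.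
    move=> i _; rewrite interval_sumE //; apply: leq_trans le_M.
    by rewrite /cube_radius (bigD1 i) //= leq_maxl.
  by rewrite prodr_if_forall card_ord.
rewrite /boxsum /interval_sum (bigA_distr_bigA (fun i (j : 'I_(M + M).+1) =>
  chi_interval (x i + (j%:Z - M%:Z)%:~R) *
  expi (2 * pi * ((k i)%:~R * (j%:Z - M%:Z)%:~R) / N%:R))) mulr_sumr.
by apply: eq_bigr => n _; rewrite chi_cube_prod echar_shift mulrCA -big_split.
Qed.

Lemma cvg_lattice_sum (P : ('I_d -> R[i]) -> R[i]) (c : ('I_d -> int) -> R[i])
    (x : 'I_d -> R) (M : nat) :
  (forall y, ((fun L => boxsum d L (fun k => c k * echar k y)) : nat -> R[i]^o)
     @ \oo --> (P (realvec y) : R[i]^o)) ->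
  (cube_radius x <= M)%N ->
  ((fun L => boxsum d L (fun k => c k * cube_weight k * echar k x)) : nat -> R[i]^o)
    @ \oo --> (boxsum d M (fun n => P (realvec (shiftz x n)) * chi_cube N (shiftz x n))
               : R[i]^o).
Proof.
move=> cvg_series le_M.
pose y (n : {ffun 'I_d -> 'I_(M + M).+1}) := shiftz x (fun i => (n i)%:Z - M%:Z).
have -> : (fun L => boxsum d L (fun k => c k * cube_weight k * echar k x)) =
    (fun L => \sum_n boxsum d L (fun k => c k * echar k (y n)) * chi_cube N (y n)).
  apply: funext => L; rewrite /boxsum; under [RHS]eq_bigr do rewrite mulr_suml.
  rewrite exchange_big; apply: eq_bigr => k _.
  rewrite mulrAC -mulrA -(boxsum_chi_cube_echar _ le_M) /boxsum mulr_sumr.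
  by apply: eq_bigr => n _; rewrite (mulrC (chi_cube _ _)) mulrA.
apply: cvg_big => [|n _]; first exact: add_continuous.
exact: cvgMr_tmp (cvg_series _).
Qed.

Lemma partition_of_unityE (P : ('I_d -> R[i]) -> R[i]) (c : ('I_d -> int) -> R[i]) :
  (forall y, ((fun L => boxsum d L (fun k => c k * echar k y)) : nat -> R[i]^o)
     @ \oo --> (P (realvec y) : R[i]^o)) ->
  partition_of_unity N P <->
  forall x, ((fun L => boxsum d L (fun k => c k * cube_weight k * echar k x))
               : nat -> R[i]^o) @ \oo --> (1 : R[i]^o).
Proof.
move=> cvg_series; split => pou x.
  pose S M : R[i]^o :=
    boxsum d M (fun n => P (realvec (shiftz x n)) * chi_cube N (shiftz x n)).
  have S_cvg : S @ \oo --> S (cube_radius x).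
    apply: cvg_near_cst; near=> M.
    have le_M : (cube_radius x <= M)%N by near: M; exact: nbhs_infty_ge.
    exact: (cvg_unique _ (cvg_lattice_sum cvg_series le_M)
                         (cvg_lattice_sum cvg_series (leqnn _))).
  rewrite -(cvg_unique _ S_cvg (pou x)) //.
  exact: cvg_lattice_sum cvg_series (leqnn _).
apply: cvg_near_cst; near=> M.
have le_M : (cube_radius x <= M)%N by near: M; exact: nbhs_infty_ge.
exact: (cvg_unique _ (cvg_lattice_sum cvg_series le_M) (pou x)).
Unshelve. all: by end_near.
Qed.

End LatticeSum.

Arguments cube_weight {R d} N k.

Lemma dvdz_abs_lt_eq0 (L : nat) (m : int) : (L%:Z %| m)%Z -> (absz m < L)%N -> m = 0.
Proof.
rewrite dvdzE => L_dvd m_lt; apply/eqP; rewrite -absz_eq0; apply/eqP.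
by apply/contraTeq: m_lt => /negbTE m_neq0; rewrite -leqNgt dvdn_leq // lt0n m_neq0.
Qed.

Lemma normcE (R : realType) (z : R[i]) : `|z| = (Normc.normc z)%:C.
Proof. by []. Qed.

Lemma normc_ge0 (R : realType) (z : R[i]) : 0 <= Normc.normc z.
Proof. by have := normr_ge0 z; rewrite normcE -[0 : R[i]]/(0%:C) lecR. Qed.

Section FourierUniqueness.
Variables (R : realType) (d N : nat).
Hypothesis N_gt0 : (0 < N)%N.

Definition grid_point (L : nat) (m : {ffun 'I_d -> 'I_L}) : 'I_d -> R :=
  fun i => N%:R * (m i)%:R / L%:R.

Lemma sum_grid_echar (L : nat) (k : 'I_d -> int) : (0 < L)%N ->
  \sum_(m : {ffun 'I_d -> 'I_L}) echar N k (grid_point m) =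
  if [forall i, (L%:Z %| k i)%Z] then L%:R ^+ d else 0.
Proof.
move=> L_gt0; pose w i := expi (2 * pi * (k i)%:~R / L%:R : R).
rewrite (eq_bigr (fun m : {ffun 'I_d -> 'I_L} => \prod_i w i ^+ m i)); last first.
  move=> m _; under eq_bigr do rewrite -expiMn.
  rewrite -expi_sum /echar /zdot mulr_sumr mulr_suml; congr expi.
  apply: eq_bigr => i _; rewrite /grid_point; field.
  by rewrite !pnatr_eq0 -!lt0n N_gt0 L_gt0.
rewrite -(bigA_distr_bigA (fun i (t : 'I_L) => w i ^+ t)) /=.
by under eq_bigr do rewrite sum_expi_root_pow //; rewrite prodr_if_forall card_ord.
Qed.

Definition cong_ind (L : nat) (j0 k : 'I_d -> int) : R[i] :=
  if [forall i, (L%:Z %| k i - j0 i)%Z] then 1 else 0.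

Lemma cong_indE (L : nat) (j0 k : 'I_d -> int) :
  (forall i, (absz (k i - j0 i) < L)%N) ->
  cong_ind L j0 k = if [forall i, k i == j0 i] then 1 else 0.
Proof.
move=> small; rewrite /cong_ind; congr (if _ then _ else _); apply: eq_forallb => i.
apply/idP/eqP => [L_dvd|->]; last by rewrite subrr dvdz0.
by apply/eqP; rewrite -subr_eq0; apply/eqP/(dvdz_abs_lt_eq0 L_dvd).
Qed.

Lemma cvg_congruence_sum (a : ('I_d -> int) -> R[i]) (C : R[i]) (L : nat)
    (j0 : 'I_d -> int) : (0 < L)%N ->
  (forall x, ((fun M => boxsum d M (fun k => a k * echar N k x)) : nat -> R[i]^o)
     @ \oo --> (C : R[i]^o)) ->
  ((fun M => boxsum d M (fun k => a k * cong_ind L j0 k)) : nat -> R[i]^o)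
    @ \oo --> (C * cong_ind L j0 (fun _ => 0) : R[i]^o).
Proof.
move=> L_gt0 cvg_series.
have Ld_neq0 : (L%:R : R[i]) ^+ d != 0 by rewrite expf_neq0 // pnatr_eq0 -lt0n.
pose e_j0 (m : {ffun 'I_d -> 'I_L}) := echar N (fun i => - j0 i) (grid_point m).
have grid_cong k :
    \sum_m echar N k (grid_point m) * e_j0 m = L%:R ^+ d * cong_ind L j0 k.
  under eq_bigr do rewrite -echarD.
  by rewrite sum_grid_echar // /cong_ind; case: ifP; rewrite ?mulr1 ?mulr0.
have -> : C * cong_ind L j0 (fun _ => 0) = (L%:R ^+ d)^-1 * \sum_m C * e_j0 m.
  have sum_e_j0 : \sum_m e_j0 m = L%:R ^+ d * cong_ind L j0 (fun _ => 0).
    by rewrite -grid_cong; apply: eq_bigr => m _; rewrite echar0 mul1r.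
  by rewrite -mulr_sumr mulrCA sum_e_j0 mulKf.
have -> : (fun M => boxsum d M (fun k => a k * cong_ind L j0 k)) =
    (fun M => (L%:R ^+ d)^-1 *
       \sum_m boxsum d M (fun k => a k * echar N k (grid_point m)) * e_j0 m).
  apply: funext => M; rewrite -[LHS](mulKf Ld_neq0); congr (_ * _).
  rewrite /boxsum mulr_sumr; under [RHS]eq_bigr do rewrite mulr_suml.
  rewrite exchange_big; apply: eq_bigr => k _.
  by rewrite mulrCA -grid_cong mulr_sumr; apply: eq_bigr => m _; rewrite mulrA.
apply: cvgMl_tmp; apply: cvg_big => [|m _]; first exact: add_continuous.
exact: cvgMr_tmp (cvg_series _).
Qed.

Definition maxabs (j : 'I_d -> int) : nat := (\max_i absz (j i))%N.

Lemma maxabs_ge (j : 'I_d -> int) (i : 'I_d) : (absz (j i) <= maxabs j)%N.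
Proof. by rewrite /maxabs (bigD1 i) //= leq_maxl. Qed.

Definition abs_boxsum (a : ('I_d -> int) -> R[i]) (M : nat) : R :=
  boxsum d M (fun k => Normc.normc (a k)).

Lemma abs_boxsum_split (a : ('I_d -> int) -> R[i]) (M M' : nat) : (M <= M')%N ->
  abs_boxsum a M' = abs_boxsum a M +
    \sum_(n : {ffun 'I_d -> 'I_(M' + M').+1} | ~~ inbox M (fun i => (n i)%:Z - M'%:Z))
       Normc.normc (a (fun i => (n i)%:Z - M'%:Z)).
Proof.
move=> le_MM'; rewrite /abs_boxsum -(boxsum_inbox _ le_MM') /boxsum.
by rewrite (bigID (fun n : {ffun 'I_d -> 'I_(M' + M').+1} =>
  inbox M (fun i => (n i)%:Z - M'%:Z))).
Qed.

Lemma abs_boxsum_nondecreasing (a : ('I_d -> int) -> R[i]) :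
  nondecreasing_seq (abs_boxsum a).
Proof.
move=> M M' le_MM'; rewrite (abs_boxsum_split a le_MM') lerDl.
by apply: sumr_ge0 => n _; exact: normc_ge0.
Qed.

Lemma boxsum_cong_tail (a : ('I_d -> int) -> R[i]) (j0 : 'I_d -> int) (L M M' : nat) :
  (maxabs j0 <= M)%N -> (M + maxabs j0 < L)%N -> (M <= M')%N ->
  `|boxsum d M' (fun k => a k * cong_ind L j0 k) - a j0| <=
  (abs_boxsum a M' - abs_boxsum a M)%:C.
Proof.
move=> j0_le le_L le_MM'.
have j0_in : inbox M j0.
  by apply/forallP => i; have := maxabs_ge j0 i; move=> ?; apply/andP; split; lia.
have inner : boxsum d M (fun k => a k * cong_ind L j0 k) = a j0.
  rewrite -(boxsum_delta (a j0) j0_in) /boxsum; apply: eq_bigr => n _.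
  have /forallP n_in := inbox_shift n.
  rewrite cong_indE => [|i]; last by move: (n_in i) (maxabs_ge j0 i); lia.
  case: forallP => [n_eq|_]; last by rewrite mulr0.
  by rewrite mulr1; congr a; apply: funext => i; apply/eqP/n_eq.
rewrite /boxsum (bigID (fun n : {ffun 'I_d -> 'I_(M' + M').+1} =>
  inbox M (fun i => (n i)%:Z - M'%:Z))) /=.
rewrite (boxsum_inbox (fun k => a k * cong_ind L j0 k) le_MM') inner addrC addKr.
apply: le_trans (ler_norm_sum _ _ _) _.
rewrite (abs_boxsum_split a le_MM') addrC addKr rmorph_sum /=.
apply: ler_sum => n _; rewrite normrM /cong_ind.
by case: ifP => _; rewrite ?normr1 ?normr0 ?mulr1 ?mulr0 // -normcE.
Qed.

Lemma fourier_coef_const (a : ('I_d -> int) -> R[i]) (C : R[i]) (B : R) :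
  (forall M, abs_boxsum a M <= B) ->
  (forall x, ((fun M => boxsum d M (fun k => a k * echar N k x)) : nat -> R[i]^o)
     @ \oo --> (C : R[i]^o)) ->
  forall j0, a j0 = if [forall i, j0 i == 0] then C else 0.
Proof.
move=> abs_bounded cvg_series j0.
have abs_mono := abs_boxsum_nondecreasing a.
have abs_cvg : abs_boxsum a @ \oo --> limn (abs_boxsum a).
  by apply: nondecreasing_is_cvgn => //; exists B => _ [M _ <-].
have abs_le_lim := nondecreasing_cvgn_le abs_mono abs_cvg.
set S := limn _ in abs_cvg abs_le_lim.
pose J := maxabs j0; set target := if _ then C else 0.
have cong_lim L : (J < L)%N -> C * cong_ind L j0 (fun _ => 0) = target.
  move=> J_lt; rewrite cong_indE => [|i]; last first.
    by rewrite sub0r abszN; apply: leq_ltn_trans (maxabs_ge j0 i) J_lt.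
  rewrite /target; under [in RHS]eq_forallb => i do rewrite eq_sym.
  by case: ifP; rewrite ?mulr1 ?mulr0.
suff dist_small e : 0 < e -> Normc.normc (target - a j0) <= e.
  have dist0 : Normc.normc (target - a j0) = 0.
    apply/le_anti; rewrite normc_ge0 andbT.
    by apply/ler_addgt0Pr => e e_gt0; rewrite add0r; exact: dist_small.
  by apply/eqP; rewrite eq_sym -subr_eq0 -normr_eq0 normcE dist0.
move=> e_gt0; have e2_gt0 : 0 < e / 2 by rewrite divr_gt0.
have [M0 _ abs_close] := (cvgrPdist_lt _ _).1 abs_cvg _ e2_gt0.
(* Since M + J < L, the class of j0 mod L meets the box of radius M only in j0,
   and L divides j0 only if j0 = 0. *)
pose M := (M0 + J)%N; pose L := (M + J).+1.
have cong_cvg := cvg_congruence_sum (j0 := j0) (ltn0Sn (M + J)) cvg_series.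
rewrite cong_lim in cong_cvg; last by rewrite /L /M; lia.
have [M1 _ cong_close] :=
  (cvgrPdist_lt _ _).1 cong_cvg (e / 2)%:C (eqbRL (ltcR _ _) e2_gt0).
pose M' := maxn M1 M.
have := cong_close M' (leq_maxl _ _); rewrite normcE ltcR => close1.
have := boxsum_cong_tail a (leq_addl M0 J) (ltnSn _) (leq_maxr M1 M).
rewrite normcE lecR => close2.
have /andP[_ close3] : - (e / 2) < S - abs_boxsum a M < e / 2.
  by rewrite -ltr_norml; exact: abs_close (leq_addr _ _).
have := ler_distD (boxsum d M' (fun k => a k * cong_ind L j0 k)) target (a j0).
rewrite !normcE -rmorphD lecR => triangle.
have := abs_le_lim M'; lra.
Qed.

End FourierUniqueness.

Lemma cube_weight_coefP (R : realType) (d N : nat) (c : ('I_d -> int) -> R[i]) :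
  (0 < N)%N ->
  (forall k, (forall j, (N%:Z %| k j)%Z) ->
     c k = if [forall j, k j == 0] then (N%:R ^+ d)^-1 else 0) <->
  (forall k, c k * cube_weight N k = if [forall j, k j == 0] then 1 else 0).
Proof.
move=> N_gt0.
have Nd_neq0 : (N%:R : R[i]) ^+ d != 0 by rewrite expf_neq0 // pnatr_eq0 -lt0n.
split=> c_spec k; rewrite /cube_weight.
  case: forallP => [N_dvd|N_ndvd].
    by rewrite (c_spec k N_dvd); case: ifP; rewrite ?mul0r ?mulVf.
  case: forallP => [k0|_]; last by rewrite mulr0.
  by case: N_ndvd => j; rewrite (eqP (k0 j)) dvdz0.
move=> N_dvd; move: (c_spec k).
rewrite /cube_weight (_ : [forall j, (N%:Z %| k j)%Z] = true); last exact/forallP.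
move=> ck_eq; apply: (mulIf Nd_neq0).
by rewrite ck_eq; case: ifP; rewrite ?mul0r ?mulVf.
Qed.

Lemma abs_boxsum_weight_le (R : realType) (d N M : nat) (c : ('I_d -> int) -> R[i])
    (B : R[i]) :
  boxsum d M (fun k => `|c k|) <= B ->
  (abs_boxsum (fun k => c k * cube_weight N k) M)%:C <= N%:R ^+ d * B.
Proof.
move=> le_B; rewrite /abs_boxsum /boxsum rmorph_sum.
apply: le_trans (ler_wpM2l (exprn_ge0 _ (ler0n _ N)) le_B).
rewrite /boxsum mulr_sumr; apply: ler_sum => n _.
rewrite /= -normcE normrM mulrC /cube_weight; case: ifP => _.
  by rewrite normrX normr_nat.
by rewrite normr0 mul0r mulr_ge0 ?normr_ge0 ?exprn_ge0 ?ler0n.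
Qed.

Theorem corollary2p3 (R : realType) (d N : nat)
    (P : ('I_d -> R[i]) -> R[i]) (c : ('I_d -> int) -> R[i]) :
  (2 <= d)%N -> (0 < N)%N ->
  entire P -> lattice_periodic N P -> fourier_series_of N P c ->
  (partition_of_unity N P <->
   forall k : 'I_d -> int, (forall j, (N%:Z %| k j)%Z) ->
     c k = (if [forall j, k j == 0] then (N%:R ^+ d)^-1 else 0)).
Proof.
move=> _ N_gt0 _ _ [[B c_bounded] cvg_series].
apply: (iff_trans (partition_of_unityE N_gt0 cvg_series)).
apply: (iff_trans _ (iff_sym (cube_weight_coefP c N_gt0))).
split=> [cvg_one | coef_delta x].
  apply: (fourier_coef_const N_gt0 (a := fun k => c k * cube_weight N k)
           (B := complex.Re (N%:R ^+ d * B))) cvg_one => M.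
  by have := abs_boxsum_weight_le N (c_bounded M); rewrite lecE => /andP[].
apply: cvg_near_cst; apply: nearW => L.
have zero_in : inbox L (fun _ : 'I_d => 0) by apply/forallP => i; rewrite oppr_le0.
rewrite -(boxsum_delta (1 : R[i]) zero_in); apply: eq_bigr => n _.
rewrite coef_delta; case: forallP => [n0|_]; last by rewrite mul0r.
rewrite mul1r (_ : (fun _ => _) = fun _ => 0) ?echar0 //.
by apply: funext => i; apply/eqP.
Qed.
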